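(* Fix $I_{ij},I_{jk},I_{ki}\in[0,\infty)$. Consider the set $$\mathcal{R}_H^{ijk}=\{(r_i,r_j,r_k)\in\mathbb{R}^3_{>0}:\ l_{ij},l_{jk},l_{ki}\text{ satisfy the strict triangle inequalities}\},$$ where $l_{ij},l_{jk},l_{ki}>0$ are given by $$\cosh l_{ij}=\cosh r_i\cosh r_j+I_{ij}\sinh r_i\sinh r_j,$$ $$\cosh l_{jk}=\cosh r_j\cosh r_k+I_{jk}\sinh r_j\sinh r_k,$$ $$\cosh l_{ki}=\cosh r_k\cosh r_i+I_{ki}\sinh r_k\sinh r_i.$$ Then $\mathcal{R}_H^{ijk}$ is a connected and simply connected open subset of $\mathbb{R}^3_{>0}$. *)

From Stdlib Require Import Reals.
Open Scope R_scope.

Definition R3 : Type := (R * R * R)%type.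

(* Distance on R^3 (max norm; induces the standard Euclidean topology). *)
Definition dist3 (p q : R3) : R :=
  let '(x1, y1, z1) := p in let '(x2, y2, z2) := q in
  Rmax (Rabs (x1 - x2)) (Rmax (Rabs (y1 - y2)) (Rabs (z1 - z2))).

Definition open3 (S : R3 -> Prop) : Prop :=
  forall p, S p -> exists eps, 0 < eps /\ forall q, dist3 q p < eps -> S q.

Definition connected3 (S : R3 -> Prop) : Prop :=
  forall U V : R3 -> Prop, open3 U -> open3 V ->
    (forall p, S p -> U p \/ V p) ->
    (exists p, S p /\ U p) -> (exists p, S p /\ V p) ->
    exists p, S p /\ U p /\ V p.

Definition path_cont (g : R -> R3) : Prop :=
  forall t, 0 <= t <= 1 -> forall eps, 0 < eps -> exists delta, 0 < delta /\
    forall t', 0 <= t' <= 1 -> Rabs (t' - t) < delta -> dist3 (g t') (g t) < eps.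

Definition square_cont (H : R -> R -> R3) : Prop :=
  forall s t, 0 <= s <= 1 -> 0 <= t <= 1 -> forall eps, 0 < eps ->
    exists delta, 0 < delta /\
    forall s' t', 0 <= s' <= 1 -> 0 <= t' <= 1 ->
      Rabs (s' - s) < delta -> Rabs (t' - t) < delta ->
      dist3 (H s' t') (H s t) < eps.

Definition path_in (S : R3 -> Prop) (g : R -> R3) : Prop :=
  path_cont g /\ forall t, 0 <= t <= 1 -> S (g t).

Definition path_connected3 (S : R3 -> Prop) : Prop :=
  forall p q, S p -> S q ->
    exists g, path_in S g /\ g 0 = p /\ g 1 = q.

Definition simply_connected3 (S : R3 -> Prop) : Prop :=
  path_connected3 S /\
  forall g, path_in S g -> g 0 = g 1 ->
    exists H : R -> R -> R3,
      square_cont H /\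
      (forall s t, 0 <= s <= 1 -> 0 <= t <= 1 -> S (H s t)) /\
      (forall t, 0 <= t <= 1 -> H 0 t = g t) /\
      (forall t, 0 <= t <= 1 -> H 1 t = g 0) /\
      (forall s, 0 <= s <= 1 -> H s 0 = g 0 /\ H s 1 = g 0).

(* Inverse hyperbolic cosine on [1, oo): the unique l >= 0 with cosh l = x. *)
Definition arcosh (x : R) : R := ln (x + sqrt (x * x - 1)).

Definition edge_len (I a b : R) : R :=
  arcosh (cosh a * cosh b + I * sinh a * sinh b).

Definition RH (Iij Ijk Iki : R) (p : R3) : Prop :=
  let '(ri, rj, rk) := p in
  0 < ri /\ 0 < rj /\ 0 < rk /\
  let lij := edge_len Iij ri rj in
  let ljk := edge_len Ijk rj rk in
  let lki := edge_len Iki rk ri in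
  lij < ljk + lki /\ ljk < lki + lij /\ lki < lij + ljk.

From Stdlib Require Import Reals Lra Psatz Nsatz Classical.
Open Scope R_scope.

(* 1. Triangle criterion: lengths A, B, C >= 0 satisfy the strict triangle
      inequalities iff the Gram determinant
      1 + 2xyz - x^2 - y^2 - z^2 of x = cosh A, y = cosh B, z = cosh C is > 0.
   2. With k = coth r the edge cosines are sinh r_i sinh r_j (k_i k_j + I_ij),
      and the Gram determinant factors as (sinh r_i sinh r_j sinh r_k)^2 times
      an explicit quadratic form Qf in k; so R_H = {r > 0 | Qf (coth r) > 0}.
   3. In the coordinates v = coth^2 r in (1, oo), the form becomes
      Fv(v) = Qf(sqrt v), which is concave because I >= 0 makes all
      cross-coefficients nonnegative and sqrt(v_i v_j) is concave.  Hence R_H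
      is convex in these coordinates: the segments mix s p q, straight in v,
      stay in R_H and depend continuously on (s, p, q).
   4. General topology: a subset of R^3 with such continuous segments is
      path-connected and its loops contract along the segments; path-connected
      sets are connected; and a strict superlevel set of a function continuous
      on the positive octant is open. *)

Lemma cosh_sinh_sq x : cosh x * cosh x - sinh x * sinh x = 1.
Proof. unfold cosh, sinh; rewrite exp_Ropp; pose proof (exp_pos x); field; lra. Qed.

Lemma cosh_pos x : 0 < cosh x.
Proof. unfold cosh; pose proof (exp_pos x); pose proof (exp_pos (- x)); lra. Qed.

Lemma cosh_ge_1 x : 1 <= cosh x.
Proof. pose proof (cosh_sinh_sq x); pose proof (cosh_pos x); nra. Qed.

Lemma sinh_pos x : 0 < x -> 0 < sinh x.
Proof. intro Hx; rewrite <- sinh_0; now apply sinh_lt. Qed.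

Lemma sinh_nonneg x : 0 <= x -> 0 <= sinh x.
Proof. intros [Hx | <-]; [left; now apply sinh_pos | rewrite sinh_0; lra]. Qed.

Lemma cosh_plus x y : cosh (x + y) = cosh x * cosh y + sinh x * sinh y.
Proof.
  unfold cosh, sinh; rewrite Ropp_plus_distr, !exp_plus, !exp_Ropp.
  pose proof (exp_pos x); pose proof (exp_pos y); field; lra.
Qed.

Lemma cosh_minus x y : cosh (x - y) = cosh x * cosh y - sinh x * sinh y.
Proof. unfold Rminus; rewrite cosh_plus; unfold cosh, sinh; rewrite Ropp_involutive; lra. Qed.

Lemma cosh_Rabs x : cosh (Rabs x) = cosh x.
Proof.
  unfold Rabs; destruct (Rcase_abs x); [|reflexivity].
  unfold cosh; rewrite Ropp_involutive; lra.
Qed.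

(* cosh is strictly increasing on [0, oo), via
   cosh v - cosh u = (e^v - e^u) (1 - e^(-u) e^(-v)). *)
Lemma cosh_increasing u v : 0 <= u -> u < v -> cosh u < cosh v.
Proof.
  intros Hu Huv; unfold cosh.
  assert (Hexp : exp u < exp v) by (apply exp_increasing; lra).
  assert (Hprod : exp (- u) * exp (- v) < 1).
  { rewrite <- exp_plus, <- exp_0; apply exp_increasing; lra. }
  assert (Hfact : exp v + exp (- v) - (exp u + exp (- u))
                  = (exp v - exp u) * (1 - exp (- u) * exp (- v))).
  { rewrite !exp_Ropp; pose proof (exp_pos u); pose proof (exp_pos v); field; lra. }
  nra.
Qed.

Lemma cosh_lt_iff u v : 0 <= u -> 0 <= v -> (cosh u < cosh v <-> u < v).
Proof.
  intros Hu Hv; split; [|now apply cosh_increasing].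
  intro Hc; destruct (Rtotal_order u v) as [Huv | [-> | Hvu]]; [easy | lra |].
  pose proof (cosh_increasing v u Hv Hvu); lra.
Qed.

Lemma arcosh_spec x : 1 <= x -> cosh (arcosh x) = x /\ 0 <= arcosh x.
Proof.
  intro Hx; unfold arcosh.
  assert (Hq : 0 <= x * x - 1) by nra.
  pose proof (sqrt_pos (x * x - 1)); pose proof (sqrt_sqrt _ Hq).
  set (q := sqrt (x * x - 1)) in *.
  split.
  - assert (Hinv : / (x + q) = x - q) by (field_simplify_eq; nra).
    unfold cosh; rewrite exp_Ropp, exp_ln, Hinv by lra; lra.
  - rewrite <- ln_1; destruct (Req_dec (x + q) 1) as [-> | Hne]; [lra|].
    left; apply ln_increasing; lra.
Qed.

Lemma edge_len_spec I a b : 0 <= I -> 0 < a -> 0 < b ->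
  cosh (edge_len I a b) = cosh a * cosh b + I * sinh a * sinh b /\ 0 <= edge_len I a b.
Proof.
  intros HI Ha Hb; apply arcosh_spec.
  pose proof (cosh_ge_1 a); pose proof (cosh_ge_1 b).
  pose proof (sinh_pos a Ha); pose proof (sinh_pos b Hb).
  assert (0 <= I * sinh a * sinh b) by (apply Rmult_le_pos; [apply Rmult_le_pos|]; lra).
  nra.
Qed.

Definition strict_triangle (A B C : R) : Prop := A < B + C /\ B < C + A /\ C < A + B.

(* The Gram determinant of three unit vectors of Minkowski space with pairwise
   inner products x, y, z; a hyperbolic triangle exists iff it is positive. *)
Definition gram (x y z : R) : R := 1 + 2 * x * y * z - x * x - y * y - z * z.

(* Triangle criterion: lengths A, B, C >= 0 form a hyperbolic triangle iff
   gram (cosh A) (cosh B) (cosh C) > 0.  Writing S = sinh B sinh C, one has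
   gram = S^2 - (cosh A - cosh B cosh C)^2, and the three inequalities say
   cosh (B - C) < cosh A < cosh (B + C). *)
Lemma triangle_iff_gram A B C : 0 <= A -> 0 <= B -> 0 <= C ->
  strict_triangle A B C <-> 0 < gram (cosh A) (cosh B) (cosh C).
Proof.
  intros HA HB HC.
  set (S := sinh B * sinh C).
  assert (HS : 0 <= S) by (apply Rmult_le_pos; apply sinh_nonneg; lra).
  assert (Hgram : gram (cosh A) (cosh B) (cosh C)
                  = S * S - (cosh A - cosh B * cosh C) * (cosh A - cosh B * cosh C)).
  { unfold gram, S; pose proof (cosh_sinh_sq B); pose proof (cosh_sinh_sq C); nra. }
  assert (Hupper : A < B + C <-> cosh A < cosh B * cosh C + S).
  { unfold S; rewrite <- cosh_plus; symmetry; apply cosh_lt_iff; lra. }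
  assert (Hlower : B < C + A /\ C < A + B <-> cosh B * cosh C - S < cosh A).
  { unfold S; rewrite <- cosh_minus, <- cosh_Rabs, cosh_lt_iff by (apply Rabs_pos || lra).
    unfold Rabs; destruct (Rcase_abs (B - C)); split; intros; lra. }
  unfold strict_triangle; rewrite Hgram, Hupper, Hlower; split.
  - intros [H1 H2]; nra.
  - intro H; split; nra.
Qed.

Definition coth (r : R) : R := cosh r / sinh r.

Lemma coth_spec r : 0 < r ->
  sinh r * sinh r * (coth r * coth r - 1) = 1 /\ cosh r = sinh r * coth r.
Proof.
  intro Hr; pose proof (sinh_pos r Hr) as Hs; pose proof (cosh_sinh_sq r) as Hsq; unfold coth.
  split; [|field; lra].
  transitivity (cosh r * cosh r - sinh r * sinh r); [field|]; lra.
Qed.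

Lemma cosh_edge_len_coth I a b : 0 <= I -> 0 < a -> 0 < b ->
  cosh (edge_len I a b) = sinh a * sinh b * (coth a * coth b + I).
Proof.
  intros HI Ha Hb; rewrite (proj1 (edge_len_spec I a b HI Ha Hb)).
  rewrite (proj2 (coth_spec a Ha)), (proj2 (coth_spec b Hb)); ring.
Qed.

(* The quadratic form in k = (coth r_i, coth r_j, coth r_k) whose positivity
   characterises R_H (a, b, c stand for I_ij, I_jk, I_ki). *)
Definition Qf (a b c k1 k2 k3 : R) : R :=
  (1 - b * b) * (k1 * k1) + (1 - c * c) * (k2 * k2) + (1 - a * a) * (k3 * k3)
  + 2 * (a + b * c) * k1 * k2 + 2 * (b + a * c) * k2 * k3 + 2 * (c + a * b) * k3 * k1
  - (1 - 2 * a * b * c - a * a - b * b - c * c).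

Lemma gram_factor (a b c s1 s2 s3 k1 k2 k3 : R) :
  s1 * s1 * (k1 * k1 - 1) = 1 -> s2 * s2 * (k2 * k2 - 1) = 1 -> s3 * s3 * (k3 * k3 - 1) = 1 ->
  gram (s1 * s2 * (k1 * k2 + a)) (s2 * s3 * (k2 * k3 + b)) (s3 * s1 * (k3 * k1 + c))
  = (s1 * s2 * s3) * (s1 * s2 * s3) * Qf a b c k1 k2 k3.
Proof. intros H1 H2 H3; unfold gram, Qf; nsatz. Qed.

Lemma RH_iff_Qf a b c r1 r2 r3 : 0 <= a -> 0 <= b -> 0 <= c -> 0 < r1 -> 0 < r2 -> 0 < r3 ->
  RH a b c (r1, r2, r3) <-> 0 < Qf a b c (coth r1) (coth r2) (coth r3).
Proof.
  intros Ha Hb Hc H1 H2 H3.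
  assert (Htri : RH a b c (r1, r2, r3)
                 <-> strict_triangle (edge_len a r1 r2) (edge_len b r2 r3) (edge_len c r3 r1))
    by (unfold RH, strict_triangle; cbv zeta; tauto).
  rewrite Htri, triangle_iff_gram by (apply edge_len_spec; assumption).
  rewrite !cosh_edge_len_coth, gram_factor by (assumption || apply coth_spec; assumption).
  assert (Hs : 0 < sinh r1 * sinh r2 * sinh r3)
    by (pose proof (sinh_pos r1 H1); pose proof (sinh_pos r2 H2); pose proof (sinh_pos r3 H3);
        apply Rmult_lt_0_compat; [apply Rmult_lt_0_compat|]; assumption).
  split; intro HQ; [|apply Rmult_lt_0_compat; nra].
  destruct (Rlt_or_le 0 (Qf a b c (coth r1) (coth r2) (coth r3))) as [Hpos | Hneg]; [easy|].
  assert (0 <= (sinh r1 * sinh r2 * sinh r3) * (sinh r1 * sinh r2 * sinh r3)) by nra.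
  nra.
Qed.

Lemma coth_gt_1 r : 0 < r -> 1 < coth r.
Proof.
  intro Hr; pose proof (sinh_pos r Hr).
  assert (Hdiff : cosh r - sinh r = exp (- r)) by (unfold cosh, sinh; field).
  pose proof (exp_pos (- r)).
  unfold coth; apply (Rmult_lt_reg_r (sinh r)); [easy|]; field_simplify; lra.
Qed.

Definition arcoth (k : R) : R := ln ((k + 1) / (k - 1)) / 2.

Lemma arcoth_coth r : 0 < r -> arcoth (coth r) = r.
Proof.
  intro Hr; pose proof (sinh_pos r Hr); pose proof (coth_gt_1 r Hr).
  assert (Hratio : (coth r + 1) / (coth r - 1) = exp r * exp r).
  { assert (Hminus : cosh r - sinh r = exp (- r)) by (unfold cosh, sinh; field).
    assert (Hplus : cosh r + sinh r = exp r) by (unfold cosh, sinh; field).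
    assert (Hne : cosh r - sinh r <> 0) by (rewrite Hminus; apply Rgt_not_eq, exp_pos).
    transitivity ((cosh r + sinh r) / (cosh r - sinh r)).
    { unfold coth; field; split; [exact Hne | lra]. }
    rewrite Hplus, Hminus, exp_Ropp; pose proof (exp_pos r); field; lra. }
  unfold arcoth; rewrite Hratio, <- exp_plus, ln_exp; field.
Qed.

Lemma arcoth_ratio_gt_1 k : 1 < k -> 1 < (k + 1) / (k - 1).
Proof. intro Hk; apply (Rmult_lt_reg_r (k - 1)); [lra|]; field_simplify; lra. Qed.

Lemma arcoth_pos k : 1 < k -> 0 < arcoth k.
Proof.
  intro Hk; unfold arcoth; pose proof (arcoth_ratio_gt_1 k Hk).
  assert (0 < ln ((k + 1) / (k - 1))) by (rewrite <- ln_1; apply ln_increasing; lra).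
  lra.
Qed.

Lemma coth_arcoth k : 1 < k -> coth (arcoth k) = k.
Proof.
  intro Hk; pose proof (arcoth_ratio_gt_1 k Hk).
  assert (Hsq : exp (arcoth k) * exp (arcoth k) = (k + 1) / (k - 1)).
  { rewrite <- exp_plus; unfold arcoth.
    replace (ln ((k + 1) / (k - 1)) / 2 + ln ((k + 1) / (k - 1)) / 2)
      with (ln ((k + 1) / (k - 1))) by field.
    apply exp_ln; lra. }
  pose proof (exp_pos (arcoth k)); set (y := exp (arcoth k)) in *.
  unfold coth, cosh, sinh; rewrite exp_Ropp; fold y.
  transitivity ((y * y + 1) / (y * y - 1)); [field; split; lra|].
  rewrite Hsq; field; lra.
Qed.

(* The coordinate change r |-> v = coth(r)^2, a bijection (0, oo) -> (1, oo)
   with inverse v |-> arcoth (sqrt v).  In these coordinates R_H is convex. *)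
Definition vcoord (r : R) : R := coth r * coth r.
Definition radius (v : R) : R := arcoth (sqrt v).

Lemma vcoord_gt_1 r : 0 < r -> 1 < vcoord r.
Proof. intro Hr; pose proof (coth_gt_1 r Hr); unfold vcoord; nra. Qed.

Lemma sqrt_gt_1 v : 1 < v -> 1 < sqrt v.
Proof. intro Hv; rewrite <- sqrt_1; apply sqrt_lt_1_alt; lra. Qed.

Lemma radius_vcoord r : 0 < r -> radius (vcoord r) = r.
Proof.
  intro Hr; pose proof (coth_gt_1 r Hr); unfold radius, vcoord.
  rewrite sqrt_square by lra; now apply arcoth_coth.
Qed.

Lemma radius_pos v : 1 < v -> 0 < radius v.
Proof. intro Hv; apply arcoth_pos, sqrt_gt_1, Hv. Qed.

Lemma coth_radius v : 1 < v -> coth (radius v) = sqrt v.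
Proof. intro Hv; apply coth_arcoth, sqrt_gt_1, Hv. Qed.

Lemma vcoord_radius v : 1 < v -> vcoord (radius v) = v.
Proof. intro Hv; unfold vcoord; rewrite coth_radius by easy; apply sqrt_sqrt; lra. Qed.

Lemma sqrt_mult_concave s P0 Q0 P1 Q1 : 0 <= s <= 1 ->
  0 <= P0 -> 0 <= Q0 -> 0 <= P1 -> 0 <= Q1 ->
  (1 - s) * (sqrt P0 * sqrt Q0) + s * (sqrt P1 * sqrt Q1)
  <= sqrt ((1 - s) * P0 + s * P1) * sqrt ((1 - s) * Q0 + s * Q1).
Proof.
  intros Hs HP0 HQ0 HP1 HQ1.
  pose proof (sqrt_sqrt _ HP0); pose proof (sqrt_sqrt _ HQ0).
  pose proof (sqrt_sqrt _ HP1); pose proof (sqrt_sqrt _ HQ1).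
  pose proof (sqrt_pos P0); pose proof (sqrt_pos Q0).
  pose proof (sqrt_pos P1); pose proof (sqrt_pos Q1).
  set (p0 := sqrt P0) in *; set (q0 := sqrt Q0) in *.
  set (p1 := sqrt P1) in *; set (q1 := sqrt Q1) in *.
  rewrite <- sqrt_mult by nra.
  set (M := (1 - s) * (p0 * q0) + s * (p1 * q1)).
  assert (HM : 0 <= M)
    by (unfold M; apply Rplus_le_le_0_compat; apply Rmult_le_pos; nra).
  rewrite <- (sqrt_square M HM); apply sqrt_le_1_alt.
  assert (Hgap : ((1 - s) * P0 + s * P1) * ((1 - s) * Q0 + s * Q1) - M * M
                 = s * (1 - s) * ((p0 * q1 - p1 * q0) * (p0 * q1 - p1 * q0))).
  { unfold M; rewrite <- H, <- H0, <- H1, <- H2; ring. }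
  assert (0 <= s * (1 - s) * ((p0 * q1 - p1 * q0) * (p0 * q1 - p1 * q0)))
    by (apply Rmult_le_pos; [nra | apply Rle_0_sqr]).
  lra.
Qed.

Definition Fv (a b c v1 v2 v3 : R) : R := Qf a b c (sqrt v1) (sqrt v2) (sqrt v3).

Definition cmb (s x y : R) : R := (1 - s) * x + s * y.

(* Fv is concave on the nonnegative octant: its square terms are linear in v,
   and its cross terms are nonnegative multiples of concave geometric means. *)
Lemma Fv_concave a b c s v1 v2 v3 w1 w2 w3 : 0 <= a -> 0 <= b -> 0 <= c -> 0 <= s <= 1 ->
  0 <= v1 -> 0 <= v2 -> 0 <= v3 -> 0 <= w1 -> 0 <= w2 -> 0 <= w3 ->
  (1 - s) * Fv a b c v1 v2 v3 + s * Fv a b c w1 w2 w3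
  <= Fv a b c (cmb s v1 w1) (cmb s v2 w2) (cmb s v3 w3).
Proof.
  intros Ha Hb Hc Hs Hv1 Hv2 Hv3 Hw1 Hw2 Hw3.
  pose proof (sqrt_mult_concave s v1 v2 w1 w2 Hs Hv1 Hv2 Hw1 Hw2) as G12.
  pose proof (sqrt_mult_concave s v2 v3 w2 w3 Hs Hv2 Hv3 Hw2 Hw3) as G23.
  pose proof (sqrt_mult_concave s v3 v1 w3 w1 Hs Hv3 Hv1 Hw3 Hw1) as G31.
  assert (Hsq : forall x, 0 <= x -> sqrt x * sqrt x = x) by (intros; now apply sqrt_sqrt).
  unfold Fv, Qf, cmb; rewrite !Hsq by nra.
  assert (Hreassoc : forall A B C, 2 * A * B * C = 2 * A * (B * C)) by (intros; ring).
  rewrite !Hreassoc.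
  apply (Rmult_le_compat_l (a + b * c)) in G12; [|nra].
  apply (Rmult_le_compat_l (b + a * c)) in G23; [|nra].
  apply (Rmult_le_compat_l (c + a * b)) in G31; [|nra].
  lra.
Qed.

Lemma RH_iff_Fv a b c r1 r2 r3 : 0 <= a -> 0 <= b -> 0 <= c -> 0 < r1 -> 0 < r2 -> 0 < r3 ->
  RH a b c (r1, r2, r3) <-> 0 < Fv a b c (vcoord r1) (vcoord r2) (vcoord r3).
Proof.
  intros Ha Hb Hc H1 H2 H3; rewrite RH_iff_Qf by assumption.
  pose proof (coth_gt_1 r1 H1); pose proof (coth_gt_1 r2 H2); pose proof (coth_gt_1 r3 H3).
  unfold Fv, vcoord; rewrite !sqrt_square by lra; reflexivity.
Qed.

Definition pr1 (p : R3) : R := let '(x, _, _) := p in x.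
Definition pr2 (p : R3) : R := let '(_, x, _) := p in x.
Definition pr3 (p : R3) : R := let '(_, _, x) := p in x.

Definition positive3 (p : R3) : Prop := 0 < pr1 p /\ 0 < pr2 p /\ 0 < pr3 p.

Lemma RH_positive3 a b c p : RH a b c p -> positive3 p.
Proof. destruct p as [[x1 x2] x3]; unfold RH, positive3; simpl; tauto. Qed.

Definition mix_radius (s x y : R) : R := radius (cmb s (vcoord x) (vcoord y)).

Definition mix (s : R) (p q : R3) : R3 :=
  let '(x1, x2, x3) := p in let '(y1, y2, y3) := q in
  (mix_radius s x1 y1, mix_radius s x2 y2, mix_radius s x3 y3).

Lemma cmb_gt_1 s x y : 0 <= s <= 1 -> 1 < x -> 1 < y -> 1 < cmb s x y.
Proof.
  intros Hs Hx Hy; unfold cmb.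
  assert (0 <= (1 - s) * (x - 1)) by (apply Rmult_le_pos; lra).
  assert (0 <= s * (y - 1)) by (apply Rmult_le_pos; lra).
  destruct (Req_dec s 0) as [-> | Hs0]; [lra|].
  assert (0 < s * (y - 1)) by (apply Rmult_lt_0_compat; lra).
  lra.
Qed.

Lemma mix_radius_0 x y : 0 < x -> mix_radius 0 x y = x.
Proof.
  intro Hx; unfold mix_radius, cmb.
  replace ((1 - 0) * vcoord x + 0 * vcoord y) with (vcoord x) by ring; now apply radius_vcoord.
Qed.

Lemma mix_radius_1 x y : 0 < y -> mix_radius 1 x y = y.
Proof.
  intro Hy; unfold mix_radius, cmb.
  replace ((1 - 1) * vcoord x + 1 * vcoord y) with (vcoord y) by ring; now apply radius_vcoord.
Qed.

Lemma mix_radius_diag s x : 0 < x -> mix_radius s x x = x.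
Proof.
  intro Hx; unfold mix_radius, cmb.
  replace ((1 - s) * vcoord x + s * vcoord x) with (vcoord x) by ring; now apply radius_vcoord.
Qed.

Lemma mix_0 a b c p q : RH a b c p -> mix 0 p q = p.
Proof.
  intro Hp; destruct (RH_positive3 _ _ _ _ Hp) as (H1 & H2 & H3).
  destruct p as [[x1 x2] x3], q as [[y1 y2] y3]; simpl in *.
  now rewrite !mix_radius_0.
Qed.

Lemma mix_1 a b c p q : RH a b c q -> mix 1 p q = q.
Proof.
  intro Hq; destruct (RH_positive3 _ _ _ _ Hq) as (H1 & H2 & H3).
  destruct p as [[x1 x2] x3], q as [[y1 y2] y3]; simpl in *.
  now rewrite !mix_radius_1.
Qed.

Lemma mix_diag a b c s p : RH a b c p -> mix s p p = p.
Proof.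
  intro Hp; destruct (RH_positive3 _ _ _ _ Hp) as (H1 & H2 & H3).
  destruct p as [[x1 x2] x3]; simpl in *.
  now rewrite !mix_radius_diag.
Qed.

(* Convexity of R_H in the coordinates v: the segment stays in the region v > 1,
   and by concavity Fv stays positive along it. *)
Lemma mix_RH a b c s p q : 0 <= a -> 0 <= b -> 0 <= c -> 0 <= s <= 1 ->
  RH a b c p -> RH a b c q -> RH a b c (mix s p q).
Proof.
  intros Ha Hb Hc Hs Hp Hq.
  destruct p as [[x1 x2] x3], q as [[y1 y2] y3].
  destruct (RH_positive3 _ _ _ _ Hp) as (Hx1 & Hx2 & Hx3).
  destruct (RH_positive3 _ _ _ _ Hq) as (Hy1 & Hy2 & Hy3); cbn [pr1 pr2 pr3] in *.
  rewrite RH_iff_Fv in Hp, Hq by assumption.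
  assert (Hv : forall x y, 0 < x -> 0 < y -> 1 < cmb s (vcoord x) (vcoord y))
    by (intros; apply cmb_gt_1; [easy | apply vcoord_gt_1 ..]; assumption).
  change (RH a b c (mix_radius s x1 y1, mix_radius s x2 y2, mix_radius s x3 y3)).
  unfold mix_radius.
  rewrite RH_iff_Fv by (assumption || apply radius_pos, Hv; assumption).
  rewrite !vcoord_radius by (apply Hv; assumption).
  pose proof (vcoord_gt_1 _ Hx1); pose proof (vcoord_gt_1 _ Hx2); pose proof (vcoord_gt_1 _ Hx3).
  pose proof (vcoord_gt_1 _ Hy1); pose proof (vcoord_gt_1 _ Hy2); pose proof (vcoord_gt_1 _ Hy3).
  eapply Rlt_le_trans; [| apply Fv_concave; (assumption || lra)].
  destruct (Req_dec s 1) as [-> | Hs1]; [nra|].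
  assert (0 < (1 - s) * Fv a b c (vcoord x1) (vcoord x2) (vcoord x3)) by (apply Rmult_lt_0_compat; lra).
  assert (0 <= s * Fv a b c (vcoord y1) (vcoord y2) (vcoord y3)) by (apply Rmult_le_pos; lra).
  lra.
Qed.

Definition cont_at {X : Type} (d : X -> X -> R) (D : X -> Prop) (f : X -> R) (x : X) : Prop :=
  forall eps, 0 < eps -> exists delta, 0 < delta /\
    forall y, D y -> d y x < delta -> Rabs (f y - f x) < eps.

Definition cont3_at {X : Type} (d : X -> X -> R) (D : X -> Prop) (F : X -> R3) (x : X) : Prop :=
  forall eps, 0 < eps -> exists delta, 0 < delta /\
    forall y, D y -> d y x < delta -> dist3 (F y) (F x) < eps.

Lemma dist3_pr p q : Rabs (pr1 p - pr1 q) <= dist3 p q /\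
  Rabs (pr2 p - pr2 q) <= dist3 p q /\ Rabs (pr3 p - pr3 q) <= dist3 p q.
Proof.
  destruct p as [[x1 x2] x3], q as [[y1 y2] y3]; unfold dist3; simpl.
  pose proof (Rmax_l (Rabs (x1 - y1)) (Rmax (Rabs (x2 - y2)) (Rabs (x3 - y3)))).
  pose proof (Rmax_r (Rabs (x1 - y1)) (Rmax (Rabs (x2 - y2)) (Rabs (x3 - y3)))).
  pose proof (Rmax_l (Rabs (x2 - y2)) (Rabs (x3 - y3))).
  pose proof (Rmax_r (Rabs (x2 - y2)) (Rabs (x3 - y3))).
  lra.
Qed.

Section ContinuityRules.
Context {X : Type} (d : X -> X -> R) (D : X -> Prop).

Lemma cont_at_const (k : R) x : cont_at d D (fun _ => k) x.
Proof. intros e He; exists 1; split; [lra|]; intros; rewrite Rminus_diag, Rabs_R0; lra. Qed.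

Lemma cont_at_ext f g x : (forall y, f y = g y) -> cont_at d D f x -> cont_at d D g x.
Proof.
  intros Hfg Hf e He; destruct (Hf e He) as (delta & Hd & Hdelta).
  exists delta; split; [easy|]; intros; rewrite <- !Hfg; auto.
Qed.

Lemma cont_at_plus f g x :
  cont_at d D f x -> cont_at d D g x -> cont_at d D (fun y => f y + g y) x.
Proof.
  intros Hf Hg e He.
  destruct (Hf (e / 2)) as (d1 & Hd1 & Hf1); [lra|].
  destruct (Hg (e / 2)) as (d2 & Hd2 & Hg2); [lra|].
  exists (Rmin d1 d2); split; [now apply Rmin_pos|]; intros y Dy Hy.
  specialize (Hf1 y Dy (Rlt_le_trans _ _ _ Hy (Rmin_l _ _))).
  specialize (Hg2 y Dy (Rlt_le_trans _ _ _ Hy (Rmin_r _ _))).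
  replace (f y + g y - (f x + g x)) with ((f y - f x) + (g y - g x)) by ring.
  eapply Rle_lt_trans; [apply Rabs_triang | lra].
Qed.

Lemma cont_at_comp (h : R -> R) f x :
  cont_at d D f x -> continuity_pt h (f x) -> cont_at d D (fun y => h (f y)) x.
Proof.
  intros Hf Hh e He.
  destruct (Hh e He) as (a & Ha & Hha); destruct (Hf a Ha) as (delta & Hd & Hdelta).
  exists delta; split; [easy|]; intros y Dy Hy.
  destruct (Req_dec (f y) (f x)) as [-> | Hne]; [rewrite Rminus_diag, Rabs_R0; lra|].
  apply (Hha (f y)); repeat split; [easy|]; now apply Hdelta.
Qed.

(* Products, by polarization: f g = ((f + g)^2 - (f - g)^2) / 4. *)
Lemma cont_at_mult f g x :
  cont_at d D f x -> cont_at d D g x -> cont_at d D (fun y => f y * g y) x.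
Proof.
  intros Hf Hg.
  assert (Hscal : forall k f, cont_at d D f x -> cont_at d D (fun y => k * f y) x)
    by (intros k f' Hf'; apply (cont_at_comp (fun z => k * z)); [easy | reg]).
  assert (Hsq : forall f, cont_at d D f x -> cont_at d D (fun y => f y * f y) x)
    by (intros f' Hf'; apply (cont_at_comp (fun z => z * z)); [easy | reg]).
  apply (cont_at_ext (fun y => / 4 * ((f y + g y) * (f y + g y))
                               + - / 4 * ((f y + -1 * g y) * (f y + -1 * g y))));
    [intro; field|].
  apply cont_at_plus; apply Hscal, Hsq, cont_at_plus; auto.
Qed.

Lemma cont_at_minus f g x :
  cont_at d D f x -> cont_at d D g x -> cont_at d D (fun y => f y - g y) x.
Proof.
  intros Hf Hg; apply (cont_at_ext (fun y => f y + -1 * g y)); [intro; ring|].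
  apply cont_at_plus, cont_at_mult; auto using cont_at_const.
Qed.

Lemma cont3_at_iff F x : cont3_at d D F x <->
  cont_at d D (fun y => pr1 (F y)) x /\ cont_at d D (fun y => pr2 (F y)) x /\
  cont_at d D (fun y => pr3 (F y)) x.
Proof.
  split.
  - intro HF; repeat split; intros e He; destruct (HF e He) as (delta & Hd & Hdelta);
      exists delta; split; auto; intros y Dy Hy; specialize (Hdelta y Dy Hy);
      pose proof (dist3_pr (F y) (F x)); lra.
  - intros (H1 & H2 & H3) e He.
    destruct (H1 e He) as (d1 & Hd1 & B1).
    destruct (H2 e He) as (d2 & Hd2 & B2).
    destruct (H3 e He) as (d3 & Hd3 & B3).
    exists (Rmin d1 (Rmin d2 d3)); split; [repeat apply Rmin_pos; auto|]; intros y Dy Hy.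
    pose proof (Rmin_l d1 (Rmin d2 d3)); pose proof (Rmin_r d1 (Rmin d2 d3)).
    pose proof (Rmin_l d2 d3); pose proof (Rmin_r d2 d3).
    specialize (B1 y Dy ltac:(lra)); specialize (B2 y Dy ltac:(lra)); specialize (B3 y Dy ltac:(lra)).
    destruct (F y) as [[u1 u2] u3], (F x) as [[w1 w2] w3]; unfold dist3; simpl in *.
    apply Rmax_lub_lt; [|apply Rmax_lub_lt]; assumption.
Qed.

Lemma cont3_at_const (p : R3) x : cont3_at d D (fun _ => p) x.
Proof.
  intros e He; exists 1; split; [lra|]; intros.
  destruct p as [[x1 x2] x3]; unfold dist3; rewrite !Rminus_diag, Rabs_R0.
  unfold Rmax; repeat destruct Rle_dec; lra.
Qed.

End ContinuityRules.

Lemma continuity_pt_coth r : 0 < r -> continuity_pt coth r.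
Proof. intro Hr; pose proof (sinh_pos r Hr); unfold coth, cosh, sinh in *; reg; lra. Qed.

Lemma continuity_pt_radius v : 1 < v -> continuity_pt radius v.
Proof.
  intro Hv; pose proof (sqrt_gt_1 v Hv); pose proof (arcoth_ratio_gt_1 _ H).
  assert (Hln : continuity_pt ln ((sqrt v + 1) / (sqrt v - 1))).
  { apply derivable_continuous_pt; eexists; apply derivable_pt_lim_ln; lra. }
  unfold radius, arcoth; reg; lra.
Qed.

Lemma cont_at_mix_radius {X : Type} (d : X -> X -> R) (D : X -> Prop) fs fx fy x :
  cont_at d D fs x -> cont_at d D fx x -> cont_at d D fy x ->
  0 <= fs x <= 1 -> 0 < fx x -> 0 < fy x ->
  cont_at d D (fun y => mix_radius (fs y) (fx y) (fy y)) x.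
Proof.
  intros Hs Hx Hy Hs01 Hx0 Hy0; unfold mix_radius, vcoord, cmb.
  apply (cont_at_comp d D radius (fun y => (1 - fs y) * (coth (fx y) * coth (fx y))
                                          + fs y * (coth (fy y) * coth (fy y)))).
  - pose proof (cont_at_comp d D coth fx x Hx (continuity_pt_coth _ Hx0)) as Hcx.
    pose proof (cont_at_comp d D coth fy x Hy (continuity_pt_coth _ Hy0)) as Hcy.
    apply cont_at_plus; apply cont_at_mult; try (apply cont_at_mult; assumption); [|easy].
    apply cont_at_minus; [apply cont_at_const | easy].
  - apply continuity_pt_radius, cmb_gt_1; auto; apply vcoord_gt_1; assumption.
Qed.

Definition unit_interval (t : R) : Prop := 0 <= t <= 1.
Definition dist_R (u v : R) : R := Rabs (u - v).

Definition unit_square (x : R * R) : Prop := unit_interval (fst x) /\ unit_interval (snd x).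
Definition dist_sq (x y : R * R) : R := Rmax (Rabs (fst x - fst y)) (Rabs (snd x - snd y)).

Lemma dist_sq_fst x y : Rabs (fst x - fst y) <= dist_sq x y.
Proof. apply Rmax_l. Qed.

Lemma dist_sq_snd x y : Rabs (snd x - snd y) <= dist_sq x y.
Proof. apply Rmax_r. Qed.

Lemma square_cont_of_cont3 (H : R -> R -> R3) :
  (forall x, unit_square x -> cont3_at dist_sq unit_square (fun y => H (fst y) (snd y)) x) ->
  square_cont H.
Proof.
  intros HH s t Hs Ht e He.
  destruct (HH (s, t) (conj Hs Ht) e He) as (delta & Hd & Hdelta).
  exists delta; split; [easy|]; intros s' t' Hs' Ht' Hds Hdt.
  apply (Hdelta (s', t')); [split; assumption | apply Rmax_lub_lt; assumption].
Qed.

(* A path-connected subset of R^3 is connected: along a path from U to V, the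
   supremum of the times spent in U lies in both U and V. *)
Lemma connected_of_path_connected S : path_connected3 S -> connected3 S.
Proof.
  intros HS U V HU HV Hcov [p [Sp Up]] [q [Sq Vq]].
  destruct (HS p q Sp Sq) as (g & [Hg HgS] & Hg0 & Hg1).
  set (E := fun t => 0 <= t <= 1 /\ U (g t)).
  assert (HE0 : E 0) by (split; [lra | now rewrite Hg0]).
  destruct (completeness E) as [m [Hub Hlub]];
    [exists 1; intros t [Ht _]; lra | now exists 0 |].
  assert (Hm : 0 <= m <= 1) by (split; [now apply Hub | apply Hlub; intros t [Ht _]; lra]).
  assert (Sm : S (g m)) by now apply HgS.
  destruct (classic (U (g m))) as [Um | nUm].
  - (* g m is in U; if it were not in V, points slightly after m would be in U *)
    destruct (classic (V (g m))) as [Vm | nVm]; [now exists (g m)|].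
    destruct (Req_dec m 1) as [-> | Hm1]; [now rewrite Hg1 in nVm|].
    destruct (HU _ Um) as (eps & Heps & Hball).
    destruct (Hg m Hm eps Heps) as (delta & Hd & Hdelta).
    set (t := Rmin 1 (m + delta / 2)).
    assert (Ht : m < t <= 1) by (unfold t; split; [apply Rmin_glb_lt | apply Rmin_l]; lra).
    assert (Ht' : t <= m + delta / 2) by apply Rmin_r.
    assert (E t) by (split; [lra|]; apply Hball, Hdelta; [lra | rewrite Rabs_right; lra]).
    pose proof (Hub t H); lra.
  - (* g m is in V; points of E close to m are then in U and V *)
    assert (Vm : V (g m)) by (destruct (Hcov _ Sm); tauto).
    destruct (HV _ Vm) as (eps & Heps & Hball).
    destruct (Hg m Hm eps Heps) as (delta & Hd & Hdelta).
    destruct (classic (exists t, E t /\ m - delta < t)) as [(t & [Ht Ut] & Hlt) | Hnone].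
    + pose proof (Hub t (conj Ht Ut)).
      exists (g t); split; [now apply HgS|]; split; [easy|].
      apply Hball, Hdelta; [easy | rewrite Rabs_left1; lra].
    + assert (m <= m - delta); [|lra].
      apply Hlub; intros t Et; destruct (Rle_or_lt t (m - delta)); [easy|].
      exfalso; apply Hnone; now exists t.
Qed.

Section ContinuousSegments.
Variable S : R3 -> Prop.
Variable seg : R -> R3 -> R3 -> R3.
Hypothesis seg_mem : forall s p q, unit_interval s -> S p -> S q -> S (seg s p q).
Hypothesis seg_0 : forall p q, S p -> seg 0 p q = p.
Hypothesis seg_1 : forall p q, S q -> seg 1 p q = q.
Hypothesis seg_diag : forall s p, S p -> seg s p p = p.
Hypothesis seg_cont : forall (X : Type) (d : X -> X -> R) (D : X -> Prop) fs F G x,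
  cont_at d D fs x -> cont3_at d D F x -> cont3_at d D G x ->
  unit_interval (fs x) -> S (F x) -> S (G x) ->
  cont3_at d D (fun y => seg (fs y) (F y) (G y)) x.

Lemma segments_path_connected : path_connected3 S.
Proof.
  intros p q Sp Sq; exists (fun t => seg t p q).
  split; [split|split; auto].
  - intros t Ht; apply (seg_cont R dist_R unit_interval (fun t => t));
      auto using cont3_at_const.
    intros e He; exists e; split; [easy|]; auto.
  - intros t Ht; now apply seg_mem.
Qed.

Lemma segments_contract_loops g : path_in S g -> g 0 = g 1 ->
  exists H : R -> R -> R3,
    square_cont H /\
    (forall s t, 0 <= s <= 1 -> 0 <= t <= 1 -> S (H s t)) /\
    (forall t, 0 <= t <= 1 -> H 0 t = g t) /\
    (forall t, 0 <= t <= 1 -> H 1 t = g 0) /\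
    (forall s, 0 <= s <= 1 -> H s 0 = g 0 /\ H s 1 = g 0).
Proof.
  intros [Hg HgS] Hloop.
  assert (S0 : S (g 0)) by (apply HgS; lra).
  exists (fun s t => seg s (g t) (g 0)); split; [|split; [|split; [|split]]].
  - apply square_cont_of_cont3; intros [s t] [Hs Ht].
    apply (seg_cont (R * R) dist_sq unit_square fst (fun y => g (snd y)));
      auto using cont3_at_const.
    + intros e He; exists e; split; [easy|]; intros y _ Hy.
      pose proof (dist_sq_fst y (s, t)); lra.
    + intros e He; destruct (Hg t Ht e He) as (delta & Hd & Hdelta).
      exists delta; split; [easy|]; intros y [_ Hy] Hdy.
      apply Hdelta; [easy|]; pose proof (dist_sq_snd y (s, t)); simpl in *; lra.
  - intros s t Hs Ht; apply seg_mem; auto.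
  - intros t Ht; auto.
  - intros t Ht; auto.
  - intros s Hs; split; [|rewrite <- Hloop]; auto.
Qed.

End ContinuousSegments.

Lemma pr_mix s p q :
  pr1 (mix s p q) = mix_radius s (pr1 p) (pr1 q) /\
  pr2 (mix s p q) = mix_radius s (pr2 p) (pr2 q) /\
  pr3 (mix s p q) = mix_radius s (pr3 p) (pr3 q).
Proof. destruct p as [[x1 x2] x3], q as [[y1 y2] y3]; now repeat split. Qed.

Lemma cont3_at_mix {X : Type} (d : X -> X -> R) (D : X -> Prop) fs F G x :
  cont_at d D fs x -> cont3_at d D F x -> cont3_at d D G x ->
  unit_interval (fs x) -> positive3 (F x) -> positive3 (G x) ->
  cont3_at d D (fun y => mix (fs y) (F y) (G y)) x.
Proof.
  intros Hs HF HG Hs01 (HF1 & HF2 & HF3) (HG1 & HG2 & HG3).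
  apply cont3_at_iff in HF as (F1 & F2 & F3), HG as (G1 & G2 & G3).
  apply cont3_at_iff; repeat split.
  - apply (cont_at_ext d D (fun y => mix_radius (fs y) (pr1 (F y)) (pr1 (G y))));
      [intro; symmetry; apply pr_mix | now apply cont_at_mix_radius].
  - apply (cont_at_ext d D (fun y => mix_radius (fs y) (pr2 (F y)) (pr2 (G y))));
      [intro; symmetry; apply pr_mix | now apply cont_at_mix_radius].
  - apply (cont_at_ext d D (fun y => mix_radius (fs y) (pr3 (F y)) (pr3 (G y))));
      [intro; symmetry; apply pr_mix | now apply cont_at_mix_radius].
Qed.

Lemma open_positivity_set (S : R3 -> Prop) (f : R3 -> R) :
  (forall p, S p <-> positive3 p /\ 0 < f p) ->
  (forall p, positive3 p -> cont_at dist3 (fun _ => True) f p) ->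
  open3 S.
Proof.
  intros HS Hf p Sp; apply HS in Sp as [Hpos Hfp].
  destruct (Hf p Hpos (f p) Hfp) as (delta & Hd & Hdelta).
  destruct Hpos as (H1 & H2 & H3).
  set (eps := Rmin delta (Rmin (pr1 p) (Rmin (pr2 p) (pr3 p)))).
  assert (Heps : eps <= delta /\ eps <= pr1 p /\ eps <= pr2 p /\ eps <= pr3 p).
  { unfold eps; pose proof (Rmin_l delta (Rmin (pr1 p) (Rmin (pr2 p) (pr3 p)))).
    pose proof (Rmin_r delta (Rmin (pr1 p) (Rmin (pr2 p) (pr3 p)))).
    pose proof (Rmin_l (pr1 p) (Rmin (pr2 p) (pr3 p))).
    pose proof (Rmin_r (pr1 p) (Rmin (pr2 p) (pr3 p))).
    pose proof (Rmin_l (pr2 p) (pr3 p)); pose proof (Rmin_r (pr2 p) (pr3 p)); lra. }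
  exists eps; split; [unfold eps; repeat apply Rmin_pos; assumption|].
  intros q Hq; apply HS.
  pose proof (dist3_pr q p) as (D1 & D2 & D3).
  pose proof (Rabs_def2 _ _ (Hdelta q I ltac:(lra))).
  pose proof (Rabs_def2 (pr1 q - pr1 p) (pr1 p) ltac:(lra)).
  pose proof (Rabs_def2 (pr2 q - pr2 p) (pr2 p) ltac:(lra)).
  pose proof (Rabs_def2 (pr3 q - pr3 p) (pr3 p) ltac:(lra)).
  unfold positive3; lra.
Qed.

Definition RH_form (a b c : R) (p : R3) : R := Qf a b c (coth (pr1 p)) (coth (pr2 p)) (coth (pr3 p)).

Lemma RH_iff_form a b c p : 0 <= a -> 0 <= b -> 0 <= c ->
  RH a b c p <-> positive3 p /\ 0 < RH_form a b c p.
Proof.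
  intros Ha Hb Hc; split.
  - intro Hp; pose proof (RH_positive3 _ _ _ _ Hp) as Hpos; split; [easy|].
    destruct p as [[x1 x2] x3], Hpos as (H1 & H2 & H3).
    now apply RH_iff_Qf.
  - intros [(H1 & H2 & H3) Hf]; destruct p as [[x1 x2] x3].
    now apply RH_iff_Qf.
Qed.

Lemma cont_at_RH_form a b c p : positive3 p -> cont_at dist3 (fun _ => True) (RH_form a b c) p.
Proof.
  intros (H1 & H2 & H3).
  assert (Hid : cont3_at dist3 (fun _ => True) (fun q => q) p)
    by (intros e He; exists e; split; auto).
  apply cont3_at_iff in Hid as (C1 & C2 & C3).
  apply (cont_at_comp _ _ coth) in C1, C2, C3; try (apply continuity_pt_coth; assumption).
  unfold RH_form, Qf.
  repeat first [ assumption | apply cont_at_const | apply cont_at_plus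
               | apply cont_at_minus | apply cont_at_mult ].
Qed.

Lemma RH_path_connected a b c : 0 <= a -> 0 <= b -> 0 <= c -> path_connected3 (RH a b c).
Proof.
  intros Ha Hb Hc; apply (segments_path_connected _ mix).
  - intros; now apply mix_RH.
  - apply mix_0.
  - apply mix_1.
  - intros; now apply cont3_at_mix; try apply (RH_positive3 a b c).
Qed.

Theorem lemma3p1 (Iij Ijk Iki : R) (hij : 0 <= Iij) (hjk : 0 <= Ijk) (hki : 0 <= Iki) :
  (forall p : R3, RH Iij Ijk Iki p ->
     let '(ri, rj, rk) := p in 0 < ri /\ 0 < rj /\ 0 < rk) /\
  open3 (RH Iij Ijk Iki) /\
  connected3 (RH Iij Ijk Iki) /\
  simply_connected3 (RH Iij Ijk Iki).
Proof.
  split; [|split; [|split]].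
  - intros [[ri rj] rk] Hp; exact (RH_positive3 _ _ _ _ Hp).
  - apply (open_positivity_set _ (RH_form Iij Ijk Iki)).
    + intro p; now apply RH_iff_form.
    + apply cont_at_RH_form.
  - now apply connected_of_path_connected, RH_path_connected.
  - split; [now apply RH_path_connected|].
    apply (segments_contract_loops _ mix).
    + intros; now apply mix_RH.
    + apply mix_0.
    + apply mix_1.
    + apply mix_diag.
    + intros; now apply cont3_at_mix; try apply (RH_positive3 Iij Ijk Iki).
Qed.
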